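(* Let $\varphi(t,a,v)$ solve the non-autonomous first passage time problem (NFPT) defined in the context, let $P(t,a)=\int_{-\infty}^1\varphi(t,a,v)\,dv>0$, $ISI(t,a)=-\frac{\sigma^2}{2}\partial_v\varphi(t,a,1)$, and define the hazard rate $S(t,a)=ISI(t,a)/P(t,a)$. Let $n(t,a)$ solve the age-structured system $$\partial_t n(t,a)+\partial_a n(t,a)+S(t,a)n(t,a)=0,\qquad n(t,0)=\int_0^\infty S(t,a)n(t,a)\,da.$$ Then $$\pi(t,a,v)=\frac{\varphi(t,a,v)}{P(t,a)}\,n(t,a)$$ satisfies the equation $\partial_t\pi+\partial_a\pi+\partial_v[(\mu(t)-v)\pi]-\frac{\sigma^2}{2}\partial_v^2\pi=0$, the absorbing condition $\pi(t,a,1)=0$, the no-flux condition $\lim_{v\to-\infty}[(v-\mu(t))\pi+\frac{\sigma^2}{2}\partial_v\pi]=0$, and the reset condition $\pi(t,0,v)=\delta(v-v_r)\,r(t)$ with $r(t)=\int_0^\infty S(t,a)n(t,a)\,da=\int_0^\infty\rho(t,a)\,da$, where $\rho(t,a)=-\frac{\sigma^2}{2}\partial_v\pi(t,a,1)$; i.e. $\pi$ solves the age-and-potential system with time-dependent stimulus $\mu(t)$.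
   Context: Fix $\sigma>0$, a reset potential $v_r<1$ and a time-dependent stimulus $\mu:[0,\infty)\to\mathbb R$. The non-autonomous first passage time problem (NFPT): find $\varphi(t,a,v)$, $t>0$, $a>0$, $v<1$, such that $$\partial_t\varphi+\partial_a\varphi+\partial_v\big[(\mu(t)-v)\varphi\big]-\frac{\sigma^2}{2}\partial_v^2\varphi=0,$$ $\varphi(t,0,v)=\delta(v-v_r)$, $\varphi(t,a,1)=0$, $\lim_{v\to-\infty}\big[(v-\mu(t))\varphi+\frac{\sigma^2}{2}\partial_v\varphi\big]=0$, and $\varphi(0,a,v)=\varphi_0(a,v)$, where $\varphi_0$ is the solution of the autonomous first passage time problem with constant stimulus $\mu(0)$: $\partial_a\varphi_0+\partial_v[(\mu(0)-v)\varphi_0]-\frac{\sigma^2}{2}\partial_v^2\varphi_0=0$, $\varphi_0(0,v)=\delta(v-v_r)$, $\varphi_0(a,1)=0$, no-flux condition at $v\to-\infty$. *)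

From Stdlib Require Import Reals Lra.
Open Scope R_scope.

Definition RInt_is (f : R -> R) (a b I : R) : Prop :=
  exists pr : Riemann_integrable f a b, RiemannInt pr = I.

Definition RInt_minf_is (f : R -> R) (b I : R) : Prop :=
  forall eps, 0 < eps -> exists M, M < b /\ forall L, L < M ->
    exists J, RInt_is f L b J /\ Rabs (J - I) < eps.

Definition RInt_0pinf_is (f : R -> R) (I : R) : Prop :=
  forall eps, 0 < eps -> exists d M, 0 < d /\ d < M /\
    forall lo hi, 0 < lo < d -> M < hi ->
    exists J, RInt_is f lo hi J /\ Rabs (J - I) < eps.

Definition lim_left (f : R -> R) (x l : R) : Prop :=
  forall eps, 0 < eps -> exists d, 0 < d /\
    forall y, x - d < y < x -> Rabs (f y - l) < eps.

Definition lim_right (f : R -> R) (x l : R) : Prop :=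
  forall eps, 0 < eps -> exists d, 0 < d /\
    forall y, x < y < x + d -> Rabs (f y - l) < eps.

Definition lim_minf (f : R -> R) (l : R) : Prop :=
  forall eps, 0 < eps -> exists M, forall y, y < M -> Rabs (f y - l) < eps.

(* f is a classical solution, with partial derivatives ft = d_t f,
   fa = d_a f, fv = d_v f, fvv = d_v^2 f and fJv = d_v[(mu(t)-v) f],
   on the domain t>0, a>0, v<1, of
     d_t f + d_a f + d_v[(mu(t)-v) f] - sigma^2/2 d_v^2 f = 0,
   with absorbing condition f(t,a,1)=0 and the no-flux condition at
   v -> -oo.  f and d_v f extend continuously to v = 1 (so d_v f(t,a,1),
   used in the firing flux, is the one-sided derivative at v = 1). *)
Definition FP_classical (sigma : R) (mu : R -> R)
  (f ft fa fv fvv fJv : R -> R -> R -> R) : Prop :=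
  (forall t a v, 0 < t -> 0 < a -> v < 1 ->
     derivable_pt_lim (fun s => f s a v) t (ft t a v) /\
     derivable_pt_lim (fun b => f t b v) a (fa t a v) /\
     derivable_pt_lim (fun w => f t a w) v (fv t a v) /\
     derivable_pt_lim (fun w => fv t a w) v (fvv t a v) /\
     derivable_pt_lim (fun w => (mu t - w) * f t a w) v (fJv t a v)) /\
  (forall t a, 0 < t -> 0 < a ->
     lim_left (fun w => f t a w) 1 (f t a 1) /\
     lim_left (fun w => fv t a w) 1 (fv t a 1)) /\
  (forall t a v, 0 < t -> 0 < a -> v < 1 ->
     ft t a v + fa t a v + fJv t a v - sigma ^ 2 / 2 * fvv t a v = 0) /\
  (forall t a, 0 < t -> 0 < a -> f t a 1 = 0) /\
  (forall t a, 0 < t -> 0 < a ->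
     lim_minf (fun v => (v - mu t) * f t a v + sigma ^ 2 / 2 * fv t a v) 0).

Definition test_fn (g : R -> R) : Prop :=
  continuity g /\ exists B, forall v, Rabs (g v) <= B.

(* Reset condition  f(t,0,v) = delta(v - vr) c(t), understood as the weak
   limit a -> 0+ of f(t,a,.) against bounded continuous test functions. *)
Definition reset_delta (f : R -> R -> R -> R) (vr : R) (c : R -> R) : Prop :=
  forall t, 0 < t -> forall g, test_fn g ->
  forall eps, 0 < eps -> exists d, 0 < d /\ forall a, 0 < a < d ->
    exists I, RInt_minf_is (fun v => f t a v * g v) 1 I /\
              Rabs (I - g vr * c t) < eps.

(* Autonomous first passage time problem with constant stimulus m:
   phi0(a,v) solves d_a phi0 + d_v[(m-v)phi0] - sigma^2/2 d_v^2 phi0 = 0,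
   phi0(0,v)=delta(v-vr), phi0(a,1)=0, no flux at -oo. *)
Definition FPT_auto (sigma vr m : R) (phi0 : R -> R -> R) : Prop :=
  exists phi0a phi0v phi0vv phi0Jv : R -> R -> R,
    FP_classical sigma (fun _ => m) (fun _ a v => phi0 a v)
      (fun _ _ _ => 0) (fun _ a v => phi0a a v) (fun _ a v => phi0v a v)
      (fun _ a v => phi0vv a v) (fun _ a v => phi0Jv a v) /\
    reset_delta (fun _ a v => phi0 a v) vr (fun _ => 1).

Definition NFPT (sigma vr : R) (mu : R -> R)
  (phi phit phia phiv phivv phiJv : R -> R -> R -> R) : Prop :=
  FP_classical sigma mu phi phit phia phiv phivv phiJv /\
  reset_delta phi vr (fun _ => 1) /\
  exists phi0, FPT_auto sigma vr (mu 0) phi0 /\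
    forall a v, 0 < a -> v < 1 -> phi 0 a v = phi0 a v.

Definition cont_Dbar (F : R -> R -> R -> R) : Prop :=
  forall t a v, 0 < t -> 0 < a -> v <= 1 ->
  forall eps, 0 < eps -> exists d, 0 < d /\
    forall t' a' v', 0 < t' -> 0 < a' -> v' <= 1 ->
      Rabs (t' - t) < d -> Rabs (a' - a) < d -> Rabs (v' - v) < d ->
      Rabs (F t' a' v' - F t a v) < eps.

(* Standing regularity of a classical solution needed to differentiate
   P(t,a) = \int phi dv under the integral sign: d_t phi and d_a phi are
   jointly continuous up to v = 1 and locally dominated by an integrable
   function of v. *)
Definition NFPT_regular (phit phia : R -> R -> R -> R) : Prop :=
  cont_Dbar phit /\ cont_Dbar phia /\
  forall t a, 0 < t -> 0 < a -> exists (d : R) (g : R -> R), 0 < d /\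
    (exists Ig, RInt_minf_is g 1 Ig) /\
    forall t' a' v, 0 < t' -> 0 < a' -> Rabs (t' - t) < d ->
      Rabs (a' - a) < d -> v <= 1 ->
      Rabs (phit t' a' v) <= g v /\ Rabs (phia t' a' v) <= g v.

Definition hazard (sigma : R) (phiv : R -> R -> R -> R) (P : R -> R -> R)
  (t a : R) : R :=
  (- (sigma ^ 2 / 2) * phiv t a 1) / P t a.

(* Integrating the equation for phi over v < 1, the flux (mu - v) phi - sigma^2/2 d_v phi
   vanishes at -oo and equals -sigma^2/2 d_v phi(t,a,1) at v = 1, so (d_t + d_a) P = -ISI = -S P.
   Since also (d_t + d_a) n = -S n, the factor n / P is constant along characteristics and
   pi = phi (n / P) solves the same equation as phi, with the same boundary behaviour in v.
   As a -> 0+, P(t,a) -> 1 and n(t,a) -> n(t,0), so the reset mass is r(t) = n(t,0), and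
   -sigma^2/2 d_v pi(t,a,1) = S n.  The analytic core is differentiating P under the
   improper integral sign, justified by the domination in NFPT_regular. *)

From Stdlib Require Import Reals Lra FunctionalExtensionality.
From Coquelicot Require Import Coquelicot.
Open Scope R_scope.

(** * Improper integrals over (-oo, 1] *)

(* Same notion as [RInt_minf_is f 1], phrased with Coquelicot's total [RInt]. *)
Definition is_RInt_minf (f : R -> R) (I : R) : Prop :=
  (forall c, c <= 1 -> ex_RInt f c 1) /\
  (forall eps, 0 < eps -> exists M, forall L, L < M -> Rabs (RInt f L 1 - I) < eps).

Lemma RInt_is_iff (f : R -> R) a b I :
  RInt_is f a b I <-> ex_RInt f a b /\ RInt f a b = I.
Proof.
  split.
  - intros [pr <-]. split; [exact (ex_RInt_Reals_1 f a b pr) | apply RInt_Reals].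
  - intros [H <-]. exists (ex_RInt_Reals_0 f a b H). symmetry; apply RInt_Reals.
Qed.

Lemma RInt_minf_is_iff (f : R -> R) I : RInt_minf_is f 1 I <-> is_RInt_minf f I.
Proof.
  split.
  - intros H. split.
    + intros c Hc. destruct (H 1 Rlt_0_1) as [M [_ HL]].
      destruct (HL (Rmin M c - 1)) as [J [HJ _]]; [pose proof (Rmin_l M c); lra|].
      apply RInt_is_iff in HJ as [HJ _].
      apply (ex_RInt_Chasles_2 f (Rmin M c - 1)); [pose proof (Rmin_r M c); lra | exact HJ].
    + intros eps He. destruct (H eps He) as [M [_ HL]]. exists M.
      intros L HLM. destruct (HL L HLM) as [J [HJ HJI]].
      apply RInt_is_iff in HJ as [_ ->]. exact HJI.
  - intros [Hex Hlim] eps He. destruct (Hlim eps He) as [M HM].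
    pose proof (Rmin_l M 0). pose proof (Rmin_r M 0).
    exists (Rmin M 0). split; [lra|].
    intros L HL. exists (RInt f L 1). split; [|apply HM; lra].
    apply RInt_is_iff. split; [apply Hex; lra | reflexivity].
Qed.

(* Chasles stated at type [R] rather than at a normed module, so that [ring] and [lra] apply. *)
Lemma RInt_split (f : R -> R) a b c :
  ex_RInt f a b -> ex_RInt f b c -> RInt f a c = RInt f a b + RInt f b c.
Proof. intros Hab Hbc. symmetry. exact (RInt_Chasles f a b c Hab Hbc). Qed.

Lemma RInt_lin (f1 f2 : R -> R) a b c c' :
  ex_RInt f1 c c' -> ex_RInt f2 c c' ->
  ex_RInt (fun v => a * f1 v + b * f2 v) c c' /\
  RInt (fun v => a * f1 v + b * f2 v) c c' = a * RInt f1 c c' + b * RInt f2 c c'.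
Proof.
  intros E1 E2. split.
  - exact (ex_RInt_plus (fun v => a * f1 v) (fun v => b * f2 v) c c'
             (ex_RInt_scal f1 c c' a E1) (ex_RInt_scal f2 c c' b E2)).
  - exact (eq_trans (RInt_plus (fun v => a * f1 v) (fun v => b * f2 v) c c'
                       (ex_RInt_scal f1 c c' a E1) (ex_RInt_scal f2 c c' b E2))
                    (f_equal2 Rplus (RInt_scal f1 c c' a E1) (RInt_scal f2 c c' b E2))).
Qed.

Lemma is_RInt_minf_unique (f : R -> R) I1 I2 :
  is_RInt_minf f I1 -> is_RInt_minf f I2 -> I1 = I2.
Proof.
  intros [_ H1] [_ H2]. apply cond_eq. intros eps He.
  destruct (H1 (eps / 2)) as [M1 HM1]; [lra|].
  destruct (H2 (eps / 2)) as [M2 HM2]; [lra|].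
  pose proof (Rmin_l M1 M2). pose proof (Rmin_r M1 M2).
  specialize (HM1 (Rmin M1 M2 - 1) ltac:(lra)). specialize (HM2 (Rmin M1 M2 - 1) ltac:(lra)).
  apply Rabs_def2 in HM1. apply Rabs_def2 in HM2. apply Rabs_def1; lra.
Qed.

Lemma is_RInt_minf_ext (f g : R -> R) I :
  (forall v, v < 1 -> f v = g v) -> is_RInt_minf f I -> is_RInt_minf g I.
Proof.
  intros Hfg [Hex Hlim].
  assert (Eq : forall L, L <= 1 -> RInt f L 1 = RInt g L 1).
  { intros L HL. apply RInt_ext. intros x Hx. rewrite Rmax_right in Hx by lra. apply Hfg; lra. }
  split.
  - intros c Hc. apply (ex_RInt_ext f); [|auto].
    intros x Hx. rewrite Rmax_right in Hx by lra. apply Hfg; lra.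
  - intros eps He. destruct (Hlim eps He) as [M HM].
    pose proof (Rmin_l M 1). pose proof (Rmin_r M 1).
    exists (Rmin M 1). intros L HL. rewrite <- Eq by lra. apply HM; lra.
Qed.

Lemma is_RInt_minf_lin (f1 f2 : R -> R) I1 I2 a b :
  is_RInt_minf f1 I1 -> is_RInt_minf f2 I2 ->
  is_RInt_minf (fun v => a * f1 v + b * f2 v) (a * I1 + b * I2).
Proof.
  intros [E1 H1] [E2 H2]. split.
  - intros c Hc. exact (proj1 (RInt_lin f1 f2 a b c 1 (E1 c Hc) (E2 c Hc))).
  - intros eps He.
    set (K := Rabs a + Rabs b + 1).
    assert (HK : 0 < K) by (unfold K; pose proof (Rabs_pos a); pose proof (Rabs_pos b); lra).
    assert (HeK : 0 < eps / K) by (apply Rdiv_lt_0_compat; lra).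
    destruct (H1 (eps / K) HeK) as [M1 HM1]. destruct (H2 (eps / K) HeK) as [M2 HM2].
    set (M := Rmin (Rmin M1 M2) 1).
    pose proof (Rmin_l (Rmin M1 M2) 1). pose proof (Rmin_r (Rmin M1 M2) 1).
    pose proof (Rmin_l M1 M2). pose proof (Rmin_r M1 M2).
    exists M. intros L HL. unfold M in HL.
    specialize (HM1 L ltac:(lra)). specialize (HM2 L ltac:(lra)).
    rewrite (proj2 (RInt_lin f1 f2 a b L 1 ltac:(apply E1; lra) ltac:(apply E2; lra))).
    replace (a * RInt f1 L 1 + b * RInt f2 L 1 - (a * I1 + b * I2))
      with (a * (RInt f1 L 1 - I1) + b * (RInt f2 L 1 - I2)) by ring.
    eapply Rle_lt_trans; [apply Rabs_triang|]. rewrite !Rabs_mult.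
    assert (Rabs a * Rabs (RInt f1 L 1 - I1) <= Rabs a * (eps / K))
      by (apply Rmult_le_compat_l; [apply Rabs_pos | lra]).
    assert (Rabs b * Rabs (RInt f2 L 1 - I2) <= Rabs b * (eps / K))
      by (apply Rmult_le_compat_l; [apply Rabs_pos | lra]).
    assert ((Rabs a + Rabs b) * (eps / K) < eps).
    { replace (Rabs a + Rabs b) with (K - 1) by (unfold K; ring).
      replace ((K - 1) * (eps / K)) with (eps - eps / K) by (field; lra). lra. }
    lra.
Qed.

Lemma abs_RInt_dominated (h g : R -> R) a b :
  a <= b -> ex_RInt h a b -> ex_RInt g a b ->
  (forall v, a < v < b -> Rabs (h v) <= g v) -> Rabs (RInt h a b) <= RInt g a b.
Proof.
  intros Hab Eh Eg Hhg. eapply Rle_trans; [apply abs_RInt_le; [exact Hab | exact Eh]|].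
  apply RInt_le; [exact Hab | exact (ex_RInt_norm h a b Eh) | exact Eg | exact Hhg].
Qed.

Lemma RInt_tail_diff_dominated (h g : R -> R) L' L :
  L' <= L <= 1 -> ex_RInt h L' 1 -> ex_RInt g L' 1 ->
  (forall v, v < 1 -> Rabs (h v) <= g v) ->
  Rabs (RInt h L' 1 - RInt h L 1) <= RInt g L' 1 - RInt g L 1.
Proof.
  intros HL Eh Eg Hhg.
  assert (Eh1 : ex_RInt h L' L) by (apply (ex_RInt_Chasles_1 h L' L 1); auto).
  assert (Eg1 : ex_RInt g L' L) by (apply (ex_RInt_Chasles_1 g L' L 1); auto).
  rewrite (RInt_split h L' L 1 Eh1 (ex_RInt_Chasles_2 h L' L 1 HL Eh)),
          (RInt_split g L' L 1 Eg1 (ex_RInt_Chasles_2 g L' L 1 HL Eg)).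
  unfold Rminus. rewrite !Rplus_assoc, !Rplus_opp_r, !Rplus_0_r.
  apply abs_RInt_dominated; [lra | exact Eh1 | exact Eg1 |].
  intros x Hx. apply Hhg. lra.
Qed.

Lemma RInt_le_is_RInt_minf (g : R -> R) Ig :
  is_RInt_minf g Ig -> (forall v, v < 1 -> 0 <= g v) ->
  forall L, L <= 1 -> RInt g L 1 <= Ig.
Proof.
  intros [Eg Hg] Hpos L HL. apply Rle_plus_epsilon. intros eps He.
  destruct (Hg eps He) as [M HM].
  set (L' := Rmin M L - 1). pose proof (Rmin_l M L). pose proof (Rmin_r M L).
  specialize (HM L' ltac:(unfold L'; lra)).
  assert (EL' : ex_RInt g L' L)
    by (apply (ex_RInt_Chasles_1 g L' L 1); [unfold L'; lra | apply Eg; unfold L'; lra]).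
  rewrite (RInt_split g L' L 1 EL' (Eg L HL)) in HM.
  assert (0 <= RInt g L' L)
    by (apply RInt_ge_0; [unfold L'; lra | exact EL' | intros x Hx; apply Hpos; lra]).
  apply Rabs_def2 in HM. lra.
Qed.

Lemma is_RInt_minf_dominated_error (h g : R -> R) I Ig :
  is_RInt_minf g Ig -> is_RInt_minf h I ->
  (forall v, v < 1 -> Rabs (h v) <= g v) ->
  forall L, L <= 1 -> Rabs (RInt h L 1 - I) <= Ig - RInt g L 1.
Proof.
  intros Gi [Eh Hh] Hhg L HL.
  assert (Hpos : forall v, v < 1 -> 0 <= g v)
    by (intros v Hv; pose proof (Hhg v Hv); pose proof (Rabs_pos (h v)); lra).
  apply Rle_plus_epsilon. intros eps He.
  destruct (Hh eps He) as [M HM].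
  set (L' := Rmin M L - 1). pose proof (Rmin_l M L). pose proof (Rmin_r M L).
  specialize (HM L' ltac:(unfold L'; lra)).
  pose proof (RInt_tail_diff_dominated h g L' L ltac:(unfold L'; lra)
                (Eh L' ltac:(unfold L'; lra)) (proj1 Gi L' ltac:(unfold L'; lra)) Hhg).
  pose proof (RInt_le_is_RInt_minf g Ig Gi Hpos L' ltac:(unfold L'; lra)).
  replace (RInt h L 1 - I) with (- (RInt h L' 1 - RInt h L 1) + (RInt h L' 1 - I)) by ring.
  eapply Rle_trans; [apply Rabs_triang|]. rewrite Rabs_Ropp. lra.
Qed.

(* Cauchy criterion at -oo: the tails of [h] are controlled by those of [g]. *)
Lemma ex_is_RInt_minf_dominated (h g : R -> R) Ig :
  is_RInt_minf g Ig -> (forall c, c <= 1 -> ex_RInt h c 1) ->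
  (forall v, v < 1 -> Rabs (h v) <= g v) -> exists I, is_RInt_minf h I.
Proof.
  intros Gi Eh Hhg.
  assert (Hpos : forall v, v < 1 -> 0 <= g v)
    by (intros v Hv; pose proof (Hhg v Hv); pose proof (Rabs_pos (h v)); lra).
  assert (Cauchy : forall eps, 0 < eps -> exists M, M <= 1 /\ forall L' L, L' <= L -> L < M ->
            Rabs (RInt h L' 1 - RInt h L 1) < eps).
  { intros eps He. destruct (proj2 Gi eps He) as [M HM].
    pose proof (Rmin_l M 1). pose proof (Rmin_r M 1).
    exists (Rmin M 1). split; [lra|]. intros L' L HL'L HL.
    pose proof (RInt_tail_diff_dominated h g L' L ltac:(lra) (Eh L' ltac:(lra))
                  (proj1 Gi L' ltac:(lra)) Hhg).
    pose proof (RInt_le_is_RInt_minf g Ig Gi Hpos L' ltac:(lra)).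
    specialize (HM L ltac:(lra)). apply Rabs_def2 in HM. lra. }
  set (F := filtermap (fun L => RInt h L 1) (Rbar_locally m_infty)).
  assert (FF : ProperFilter F) by apply filtermap_proper_filter, Rbar_locally_filter.
  exists (R_complete_lim F). split; [exact Eh|].
  intros eps He.
  destruct (R_complete F FF) with (eps := mkposreal eps He) as [M HM].
  - intros [e He']. destruct (Cauchy e He') as [M [_ HM]].
    exists (RInt h (M - 1) 1). exists M. intros L HL.
    change (Rabs (RInt h L 1 - RInt h (M - 1) 1) < e).
    destruct (Rle_dec L (M - 1)).
    + apply HM; lra.
    + rewrite Rabs_minus_sym. apply HM; lra.
  - exists M. intros L HL. specialize (HM L HL). exact HM.
Qed.

(** * Differentiation under the improper integral *)

Definition continuous_le1 (s : R -> R) : Prop :=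
  forall v, v <= 1 -> forall eps, 0 < eps -> exists del, 0 < del /\
    forall w, w <= 1 -> Rabs (w - v) < del -> Rabs (s w - s v) < eps.

Lemma Rmin_1_lipschitz x z : Rabs (Rmin x 1 - Rmin z 1) <= Rabs (x - z).
Proof.
  unfold Rmin. destruct (Rle_dec x 1), (Rle_dec z 1); unfold Rabs; repeat destruct Rcase_abs; lra.
Qed.

Lemma continuous_clip1 (s : R -> R) :
  continuous_le1 s -> forall z, continuous (fun w => s (Rmin w 1)) z.
Proof.
  intros Hs z. apply continuity_pt_filterlim.
  intros eps He. destruct (Hs (Rmin z 1) (Rmin_r z 1) eps He) as [del [Hdel H]].
  exists del. split; [exact Hdel|]. intros x [_ Hx]. apply H; [apply Rmin_r|].
  eapply Rle_lt_trans; [apply Rmin_1_lipschitz | exact Hx].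
Qed.

Lemma ex_RInt_continuous_le1 (s : R -> R) :
  continuous_le1 s -> forall c c', c <= c' <= 1 -> ex_RInt s c c'.
Proof.
  intros Hs c c' Hcc. apply (ex_RInt_ext (fun w => s (Rmin w 1))).
  - intros x Hx. rewrite Rmax_right in Hx by lra. rewrite Rmin_left; lra.
  - apply (@ex_RInt_continuous R_CompleteNormedModule). intros; apply continuous_clip1, Hs.
Qed.

Lemma RInt_near_1_small (s : R -> R) L :
  L < 1 -> ex_RInt s L 1 -> forall eps, 0 < eps ->
  exists e, L < e < 1 /\ forall e', e <= e' <= 1 -> Rabs (RInt s e' 1) <= eps.
Proof.
  intros HL Es eps He.
  destruct (ex_RInt_ub s L 1 Es) as [B HB].
  set (B' := Rabs B + 1).
  assert (HB' : 0 < B') by (unfold B'; pose proof (Rabs_pos B); lra).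
  set (m := Rmin (eps / B') ((1 - L) / 2)).
  pose proof (Rmin_l (eps / B') ((1 - L) / 2)). pose proof (Rmin_r (eps / B') ((1 - L) / 2)).
  assert (Hm : 0 < m) by (apply Rmin_pos; [apply Rdiv_lt_0_compat | ]; lra).
  exists (1 - m). split; [unfold m in *; lra|]. intros e' He'.
  eapply Rle_trans.
  - apply (abs_RInt_le_const s e' 1 B'); [lra | apply (ex_RInt_Chasles_2 s L); [unfold m in *; lra | exact Es]|].
    intros x Hx. assert (Hbx : norm (s x) <= B)
      by (apply HB; rewrite Rmin_left, Rmax_right by lra; unfold m in *; lra).
    change (Rabs (s x) <= B) in Hbx. pose proof (Rle_abs B). unfold B'. lra.
  - apply Rle_trans with (m * B'); [apply Rmult_le_compat_r; lra|].
    apply Rle_trans with (eps / B' * B'); [apply Rmult_le_compat_r; unfold m; lra|].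
    right. field. lra.
Qed.

Definition jointly_continuous_le1 (f : R -> R -> R) (x0 : R) : Prop :=
  forall v, v <= 1 -> forall eps, 0 < eps -> exists del, 0 < del /\
    forall x w, Rabs (x - x0) < del -> Rabs (w - v) < del -> w <= 1 ->
      Rabs (f x w - f x0 v) < eps.

Lemma jointly_continuous_le1_section (f : R -> R -> R) x0 :
  jointly_continuous_le1 f x0 -> continuous_le1 (f x0).
Proof.
  intros Hc v Hv eps He. destruct (Hc v Hv eps He) as [del [Hdel H]].
  exists del. split; [exact Hdel|]. intros w Hw Hwv.
  apply H; [rewrite Rminus_eq_0, Rabs_R0 |..]; assumption.
Qed.

Lemma derivable_pt_lim_RInt_param_le1 (f f' : R -> R -> R) x0 d L e :
  0 < d -> L <= e < 1 ->
  (forall x, Rabs (x - x0) < d -> ex_RInt (f x) L e) ->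
  (forall x v, Rabs (x - x0) < d -> v < 1 -> derivable_pt_lim (fun s => f s v) x (f' x v)) ->
  jointly_continuous_le1 f' x0 ->
  derivable_pt_lim (fun x => RInt (f x) L e) x0 (RInt (f' x0) L e).
Proof.
  intros Hd HLe Hex Hder Hc.
  assert (DerE : forall x v, Rabs (x - x0) < d -> v < 1 -> Derive (fun s => f s v) x = f' x v)
    by (intros; apply is_derive_unique, is_derive_Reals, Hder; assumption).
  apply is_derive_Reals. rewrite <- (RInt_ext (fun t => Derive (fun u => f u t) x0)).
  - apply is_derive_RInt_param.
    + exists (mkposreal d Hd). intros y Hy t Ht. exists (f' y t). apply is_derive_Reals.
      apply Hder; [exact Hy|]. rewrite Rmax_right in Ht; lra.
    + intros t Ht. rewrite Rmin_left, Rmax_right in Ht by lra. intros eps.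
      destruct (Hc t ltac:(lra) eps (cond_pos eps)) as [del [Hdel H]].
      assert (Hdel' : 0 < Rmin del (Rmin d (1 - e))) by (repeat apply Rmin_pos; lra).
      pose proof (Rmin_l del (Rmin d (1 - e))). pose proof (Rmin_r del (Rmin d (1 - e))).
      pose proof (Rmin_l d (1 - e)). pose proof (Rmin_r d (1 - e)).
      exists (mkposreal _ Hdel'). intros u v Hu Hv. simpl in Hu, Hv.
      assert (Hv1 : v < 1) by (apply Rabs_def2 in Hv; lra).
      rewrite !DerE by (try rewrite Rminus_eq_0, Rabs_R0; lra).
      apply H; lra.
    + exists (mkposreal d Hd). intros y Hy. exact (Hex y Hy).
  - intros t Ht. rewrite Rmin_left, Rmax_right in Ht by lra.
    apply DerE; [rewrite Rminus_eq_0, Rabs_R0 | ]; lra.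
Qed.

Lemma Rabs_between x0 x1 c :
  Rmin x0 x1 <= c <= Rmax x0 x1 -> Rabs (c - x0) <= Rabs (x1 - x0).
Proof.
  unfold Rmin, Rmax. destruct (Rle_dec x0 x1); intros; unfold Rabs; repeat destruct Rcase_abs; lra.
Qed.

Lemma difference_quotient_dominated (f f' : R -> R -> R) (g : R -> R) x0 d h :
  (forall x v, Rabs (x - x0) < d -> v < 1 -> derivable_pt_lim (fun s => f s v) x (f' x v)) ->
  (forall x v, Rabs (x - x0) < d -> v < 1 -> Rabs (f' x v) <= g v) ->
  h <> 0 -> Rabs h < d ->
  forall v, v < 1 -> Rabs ((f (x0 + h) v - f x0 v) / h) <= g v.
Proof.
  intros Hder Hb Hh0 Hhd v Hv.
  assert (Hin : forall c, Rmin x0 (x0 + h) <= c <= Rmax x0 (x0 + h) -> Rabs (c - x0) < d).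
  { intros c Hc. eapply Rle_lt_trans; [apply Rabs_between; exact Hc|].
    replace (x0 + h - x0) with h by ring. exact Hhd. }
  destruct (MVT_abs (fun s => f s v) (fun s => f' s v) x0 (x0 + h)) as [c [Hmvt Hc]].
  { intros c Hc. apply Hder; [apply Hin; exact Hc | exact Hv]. }
  unfold Rdiv. rewrite Rabs_mult, Hmvt, Rabs_inv.
  replace (x0 + h - x0) with h by ring.
  rewrite Rmult_assoc, Rinv_r, Rmult_1_r by (apply Rabs_no_R0; exact Hh0).
  apply Hb; [apply Hin; exact Hc | exact Hv].
Qed.

Lemma is_RInt_minf_close_of_truncation (p q g : R -> R) Ip Iq Ig L e eps :
  L < e < 1 -> is_RInt_minf g Ig -> is_RInt_minf p Ip -> is_RInt_minf q Iq ->
  (forall v, v < 1 -> Rabs (p v) <= g v) -> (forall v, v < 1 -> Rabs (q v) <= g v) ->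
  Ig - RInt g L 1 <= eps -> Rabs (RInt g e 1) <= eps ->
  Rabs (RInt p L e - RInt q L e) < eps -> Rabs (Ip - Iq) < 5 * eps.
Proof.
  intros HLe Gi Hp Hq Bp Bq Htail Hshort Hmid.
  pose proof (is_RInt_minf_dominated_error p g Ip Ig Gi Hp Bp L ltac:(lra)) as ErrP.
  pose proof (is_RInt_minf_dominated_error q g Iq Ig Gi Hq Bq L ltac:(lra)) as ErrQ.
  assert (Ep : ex_RInt p L 1) by (apply (proj1 Hp); lra).
  assert (Eq : ex_RInt q L 1) by (apply (proj1 Hq); lra).
  assert (Eg : ex_RInt g e 1) by (apply (ex_RInt_Chasles_2 g L e 1); [lra | apply (proj1 Gi); lra]).
  assert (ShortP : Rabs (RInt p e 1) <= RInt g e 1).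
  { apply abs_RInt_dominated; [lra | apply (ex_RInt_Chasles_2 p L); [lra | exact Ep] | exact Eg |].
    intros; apply Bp; lra. }
  assert (ShortQ : Rabs (RInt q e 1) <= RInt g e 1).
  { apply abs_RInt_dominated; [lra | apply (ex_RInt_Chasles_2 q L); [lra | exact Eq] | exact Eg |].
    intros; apply Bq; lra. }
  rewrite (RInt_split p L e 1) in ErrP
    by (try apply (ex_RInt_Chasles_1 p L e 1); try apply (ex_RInt_Chasles_2 p L e 1); auto; lra).
  rewrite (RInt_split q L e 1) in ErrQ
    by (try apply (ex_RInt_Chasles_1 q L e 1); try apply (ex_RInt_Chasles_2 q L e 1); auto; lra).
  apply Rabs_le_between in ErrP. apply Rabs_le_between in ErrQ.
  apply Rabs_le_between in ShortP. apply Rabs_le_between in ShortQ.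
  apply Rabs_le_between in Hshort. apply Rabs_def2 in Hmid. apply Rabs_def1; lra.
Qed.

Lemma derivable_pt_lim_is_RInt_minf_param (f f' : R -> R -> R) (F g : R -> R) Ig x0 d :
  0 < d -> is_RInt_minf g Ig ->
  (forall x, Rabs (x - x0) < d -> is_RInt_minf (f x) (F x)) ->
  (forall x v, Rabs (x - x0) < d -> v < 1 -> derivable_pt_lim (fun s => f s v) x (f' x v)) ->
  (forall x v, Rabs (x - x0) < d -> v < 1 -> Rabs (f' x v) <= g v) ->
  jointly_continuous_le1 f' x0 ->
  exists D, is_RInt_minf (f' x0) D /\ derivable_pt_lim F x0 D.
Proof.
  intros Hd Gi HF Hder Hb Hc.
  assert (H00 : Rabs (x0 - x0) < d) by (rewrite Rminus_eq_0, Rabs_R0; exact Hd).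
  assert (Bf' : forall v, v < 1 -> Rabs (f' x0 v) <= g v) by (intros; apply Hb; auto).
  pose proof (ex_RInt_continuous_le1 _ (jointly_continuous_le1_section _ _ Hc)) as Ef'.
  destruct (ex_is_RInt_minf_dominated (f' x0) g Ig Gi
              (fun c Hc1 => Ef' c 1 (conj Hc1 (Rle_refl 1))) Bf') as [D HD].
  exists D. split; [exact HD|]. intros eps He.
  destruct (proj2 Gi (eps / 5)) as [M HM]; [lra|].
  set (L := Rmin M 0 - 1). pose proof (Rmin_l M 0). pose proof (Rmin_r M 0).
  assert (Htail : Ig - RInt g L 1 <= eps / 5)
    by (specialize (HM L ltac:(unfold L; lra)); apply Rabs_def2 in HM; lra).
  assert (EgL : ex_RInt g L 1) by (apply (proj1 Gi); unfold L; lra).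
  destruct (RInt_near_1_small g L ltac:(unfold L; lra) EgL (eps / 5) ltac:(lra)) as [e [HLe Hge]].
  assert (ExLe : forall x, Rabs (x - x0) < d -> ex_RInt (f x) L e)
    by (intros x Hx; apply (ex_RInt_Chasles_1 (f x) L e 1); [lra | apply (proj1 (HF x Hx)); lra]).
  destruct (derivable_pt_lim_RInt_param_le1 f f' x0 d L e Hd ltac:(lra) ExLe Hder Hc
              (eps / 5) ltac:(lra)) as [del Hdel].
  exists (mkposreal _ (Rmin_pos del d (cond_pos del) Hd)). intros h Hh0 Hh. simpl in Hh.
  pose proof (Rmin_l del d). pose proof (Rmin_r del d).
  specialize (Hdel h Hh0 ltac:(lra)). cbv beta in Hdel.
  assert (Hx1 : Rabs (x0 + h - x0) < d) by (replace (x0 + h - x0) with h by ring; lra).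
  replace eps with (5 * (eps / 5)) by field.
  replace ((F (x0 + h) - F x0) / h) with (/ h * F (x0 + h) + - / h * F x0) by (field; exact Hh0).
  apply (is_RInt_minf_close_of_truncation (fun v => / h * f (x0 + h) v + - / h * f x0 v)
           (f' x0) g _ _ Ig L e); try assumption; try lra.
  - apply is_RInt_minf_lin; apply HF; assumption.
  - intros v Hv.
    replace (/ h * f (x0 + h) v + - / h * f x0 v) with ((f (x0 + h) v - f x0 v) / h)
      by (field; exact Hh0).
    apply (difference_quotient_dominated f f' g x0 d h Hder Hb Hh0 ltac:(lra) v Hv).
  - apply Hge; lra.
  - rewrite (proj2 (RInt_lin _ _ _ _ L e (ExLe _ Hx1) (ExLe _ H00))).
    replace (/ h * RInt (f (x0 + h)) L e + - / h * RInt (f x0) L e)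
      with ((RInt (f (x0 + h)) L e - RInt (f x0) L e) / h) by (field; exact Hh0).
    exact Hdel.
Qed.

(** * The flux identity *)

Lemma continuous_le1_plus (s1 s2 : R -> R) :
  continuous_le1 s1 -> continuous_le1 s2 -> continuous_le1 (fun v => s1 v + s2 v).
Proof.
  intros H1 H2 v Hv eps He.
  destruct (H1 v Hv (eps / 2) ltac:(lra)) as [d1 [Hd1 K1]].
  destruct (H2 v Hv (eps / 2) ltac:(lra)) as [d2 [Hd2 K2]].
  exists (Rmin d1 d2). split; [apply Rmin_pos; assumption|].
  intros w Hw Hwv. pose proof (Rmin_l d1 d2). pose proof (Rmin_r d1 d2).
  specialize (K1 w Hw ltac:(lra)). specialize (K2 w Hw ltac:(lra)).
  replace (s1 w + s2 w - (s1 v + s2 v)) with ((s1 w - s1 v) + (s2 w - s2 v)) by ring.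
  eapply Rle_lt_trans; [apply Rabs_triang | lra].
Qed.

Lemma RInt_antiderivative_le1 (s E : R -> R) L e :
  L <= e < 1 -> continuous_le1 s ->
  (forall x, x < 1 -> derivable_pt_lim E x (- s x)) -> RInt s L e = E L - E e.
Proof.
  intros HLe Hs HE.
  assert (Hd : forall x, Rmin L e <= x <= Rmax L e ->
                 is_derive (fun w => - E w) x (s (Rmin x 1))).
  { intros x Hx. rewrite Rmin_left, Rmax_right in Hx by lra.
    rewrite Rmin_left by lra. apply is_derive_Reals.
    replace (s x) with (- - s x) by ring. apply derivable_pt_lim_opp, HE. lra. }
  pose proof (is_RInt_derive _ _ L e Hd (fun x _ => continuous_clip1 s Hs x)) as H.
  rewrite <- (RInt_ext (fun w => s (Rmin w 1))).
  - rewrite (is_RInt_unique _ _ _ _ H). change (- E e - - E L = E L - E e). ring.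
  - intros x Hx. rewrite Rmax_right in Hx by lra. rewrite Rmin_left; lra.
Qed.

Lemma RInt_left_limit (s E : R -> R) L l :
  L < 1 -> ex_RInt s L 1 ->
  (forall e, L <= e < 1 -> RInt s L e = E L - E e) ->
  lim_left E 1 l -> RInt s L 1 = E L - l.
Proof.
  intros HL Es HE Hl. apply cond_eq. intros eps He.
  destruct (RInt_near_1_small s L HL Es (eps / 2) ltac:(lra)) as [e0 [He0 Hsmall]].
  destruct (Hl (eps / 2) ltac:(lra)) as [d [Hd HEl]].
  pose proof (Rmax_l e0 (1 - d / 2)). pose proof (Rmax_r e0 (1 - d / 2)).
  assert (He1 : Rmax e0 (1 - d / 2) < 1) by (apply Rmax_lub_lt; lra).
  set (e := Rmax e0 (1 - d / 2)) in *.
  specialize (Hsmall e ltac:(lra)). specialize (HEl e ltac:(lra)).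
  rewrite (RInt_split s L e 1) by
    (try apply (ex_RInt_Chasles_1 s L e 1); try apply (ex_RInt_Chasles_2 s L e 1); auto; lra).
  rewrite HE by lra.
  apply Rabs_le_between in Hsmall. apply Rabs_def2 in HEl. apply Rabs_def1; lra.
Qed.

Lemma lim_left_drift_flux (phi phiv : R -> R) mu k c :
  lim_left phi 1 0 -> lim_left phiv 1 c ->
  lim_left (fun w => (mu - w) * phi w - k * phiv w) 1 (- k * c).
Proof.
  intros H0 Hc eps He.
  set (K := Rabs mu + 2). set (K' := Rabs k + 1).
  assert (HK : 0 < K) by (unfold K; pose proof (Rabs_pos mu); lra).
  assert (HK' : 0 < K') by (unfold K'; pose proof (Rabs_pos k); lra).
  destruct (H0 (eps / (2 * K))) as [d1 [Hd1 H1]]; [apply Rdiv_lt_0_compat; lra|].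
  destruct (Hc (eps / (2 * K'))) as [d2 [Hd2 H2]]; [apply Rdiv_lt_0_compat; lra|].
  exists (Rmin 1 (Rmin d1 d2)). split; [repeat apply Rmin_pos; lra|].
  pose proof (Rmin_l 1 (Rmin d1 d2)). pose proof (Rmin_r 1 (Rmin d1 d2)).
  pose proof (Rmin_l d1 d2). pose proof (Rmin_r d1 d2).
  intros y Hy. specialize (H1 y ltac:(lra)). specialize (H2 y ltac:(lra)).
  rewrite Rminus_0_r in H1.
  replace ((mu - y) * phi y - k * phiv y - - k * c) with ((mu - y) * phi y - k * (phiv y - c)) by ring.
  eapply Rle_lt_trans; [apply Rabs_triang|]. rewrite Rabs_Ropp, !Rabs_mult.
  assert (Rabs (mu - y) <= K).
  { unfold K. eapply Rle_trans; [apply Rabs_triang|]. rewrite Rabs_Ropp.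
    assert (Rabs y <= 1) by (apply Rabs_le; lra). lra. }
  assert (Rabs k <= K') by (unfold K'; lra).
  assert (Rabs (mu - y) * Rabs (phi y) < eps / 2).
  { apply Rle_lt_trans with (K * Rabs (phi y)); [apply Rmult_le_compat_r; [apply Rabs_pos | lra]|].
    replace (eps / 2) with (K * (eps / (2 * K))) by (field; lra).
    apply Rmult_lt_compat_l; lra. }
  assert (Rabs k * Rabs (phiv y - c) <= eps / 2).
  { replace (eps / 2) with (K' * (eps / (2 * K'))) by (field; lra).
    apply Rmult_le_compat; try apply Rabs_pos; lra. }
  lra.
Qed.

Lemma is_RInt_minf_flux (s phi phiv phivv phiJv : R -> R) (mu k : R) :
  continuous_le1 s ->
  (forall v, v < 1 -> derivable_pt_lim (fun w => (mu - w) * phi w) v (phiJv v)) ->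
  (forall v, v < 1 -> derivable_pt_lim phiv v (phivv v)) ->
  (forall v, v < 1 -> s v + phiJv v - k * phivv v = 0) ->
  lim_left phi 1 0 -> lim_left phiv 1 (phiv 1) ->
  lim_minf (fun v => (v - mu) * phi v + k * phiv v) 0 ->
  is_RInt_minf s (k * phiv 1).
Proof.
  intros Hs HJ Hvv Hpde Hl0 Hl1 Hmf.
  set (E := fun w => (mu - w) * phi w - k * phiv w).
  assert (HE : forall x, x < 1 -> derivable_pt_lim E x (- s x)).
  { intros x Hx. replace (- s x) with (phiJv x - k * phivv x) by (pose proof (Hpde x Hx); lra).
    apply (derivable_pt_lim_minus (fun w => (mu - w) * phi w) (fun w => k * phiv w)).
    - exact (HJ x Hx).
    - exact (derivable_pt_lim_scal phiv k x _ (Hvv x Hx)). }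
  assert (HInt : forall L, L < 1 -> RInt s L 1 = E L - - k * phiv 1).
  { intros L HL. apply RInt_left_limit.
    - exact HL.
    - apply ex_RInt_continuous_le1; [exact Hs | lra].
    - intros e He. apply RInt_antiderivative_le1; assumption.
    - apply lim_left_drift_flux; assumption. }
  split; [intros c Hc; apply ex_RInt_continuous_le1; [exact Hs | lra]|].
  intros eps He. destruct (Hmf eps He) as [M HM].
  exists (Rmin M 1). intros L HL. pose proof (Rmin_l M 1). pose proof (Rmin_r M 1).
  rewrite HInt by lra. specialize (HM L ltac:(lra)). rewrite Rminus_0_r in HM.
  unfold E. replace ((mu - L) * phi L - k * phiv L - - k * phiv 1 - k * phiv 1)
    with (- ((L - mu) * phi L + k * phiv L)) by ring.
  rewrite Rabs_Ropp. exact HM.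
Qed.

(** * The rescaled solution *)

Lemma is_RInt_minf_scal (f : R -> R) I c :
  is_RInt_minf f I -> is_RInt_minf (fun v => c * f v) (c * I).
Proof.
  intros Hf. replace (c * I) with (c * I + 0 * I) by ring.
  apply (is_RInt_minf_ext (fun v => c * f v + 0 * f v)); [intros; ring|].
  apply is_RInt_minf_lin; exact Hf.
Qed.

Lemma Rabs_mult_lt_of_scaled (u K eps : R) :
  0 < eps -> Rabs u < eps / (Rabs K + 1) -> Rabs (u * K) < eps.
Proof.
  intros He Hu. pose proof (Rabs_pos K). rewrite Rabs_mult.
  apply Rle_lt_trans with (eps / (Rabs K + 1) * Rabs K).
  - apply Rmult_le_compat_r; lra.
  - replace (eps / (Rabs K + 1) * Rabs K) with (eps - eps / (Rabs K + 1)) by (field; lra).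
    assert (0 < eps / (Rabs K + 1)) by (apply Rdiv_lt_0_compat; lra). lra.
Qed.

Lemma lim_left_div_mult (f : R -> R) x l A B :
  lim_left f x l -> lim_left (fun y => f y / A * B) x (l / A * B).
Proof.
  intros H eps He. pose proof (Rabs_pos (/ A * B)).
  destruct (H (eps / (Rabs (/ A * B) + 1))) as [d [Hd Hf]]; [apply Rdiv_lt_0_compat; lra|].
  exists d. split; [exact Hd|]. intros y Hy.
  replace (f y / A * B - l / A * B) with ((f y - l) * (/ A * B)) by (unfold Rdiv; ring).
  apply Rabs_mult_lt_of_scaled; [exact He | apply Hf, Hy].
Qed.

Lemma lim_minf_scal (f f2 : R -> R) K :
  lim_minf f 0 -> (forall y, f2 y = f y * K) -> lim_minf f2 0.
Proof.
  intros H Hf eps He. pose proof (Rabs_pos K).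
  destruct (H (eps / (Rabs K + 1))) as [M HM]; [apply Rdiv_lt_0_compat; lra|].
  exists M. intros y Hy. rewrite Hf, Rminus_0_r. specialize (HM y Hy). rewrite Rminus_0_r in HM.
  apply Rabs_mult_lt_of_scaled; assumption.
Qed.

Lemma derivable_pt_lim_div_mult (f : R -> R) x l A B :
  derivable_pt_lim f x l -> derivable_pt_lim (fun w => f w / A * B) x (l / A * B).
Proof.
  intros H. apply (derivable_pt_lim_ext (fun w => (B / A) * f w)); [intros; unfold Rdiv; ring|].
  replace (l / A * B) with ((B / A) * l) by (unfold Rdiv; ring).
  exact (derivable_pt_lim_scal f (B / A) x l H).
Qed.

Lemma mult_ratio_continuity X Z eps : 0 < eps -> exists eta, 0 < eta /\ forall x y z,
  Rabs (x - X) < eta -> Rabs (y - 1) < eta -> Rabs (z - Z) < eta ->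
  Rabs (x * (z / y) - X * Z) < eps.
Proof.
  intros He.
  assert (C : continuous (fun p : R * (R * R) => fst p * (snd (snd p) / fst (snd p))) (X, (1, Z))).
  { apply (continuous_mult (fun p : R * (R * R) => fst p) (fun p => snd (snd p) / fst (snd p))).
    - apply continuous_fst.
    - apply (continuous_mult (fun p : R * (R * R) => snd (snd p)) (fun p => / fst (snd p))).
      + apply (continuous_comp (fun p : R * (R * R) => snd p) snd). apply continuous_snd. apply continuous_snd.
      + apply (continuous_comp (fun p : R * (R * R) => fst (snd p)) Rinv).
        * apply (continuous_comp (fun p : R * (R * R) => snd p) fst).
          apply continuous_snd. apply continuous_fst.
        * apply continuous_Rinv. simpl. lra. }
  destruct (proj1 (filterlim_locally _ _) C (mkposreal eps He)) as [[eta Heta] H].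
  exists eta. split; [exact Heta|]. intros x y z Hx Hy Hz.
  specialize (H (x, (y, z)) (conj Hx (conj Hy Hz))).
  replace (X * Z) with (X * (Z / 1)) by field. exact H.
Qed.

(* Testing against the constant 1 shows P(t, a) -> 1 as a -> 0+, so dividing by P does not
   change the weak limit, while the factor n(t, a) tends to n(t, 0). *)
Lemma reset_delta_rescale (phi : R -> R -> R -> R) (P n : R -> R -> R) vr :
  (forall t a, 0 < t -> 0 < a -> is_RInt_minf (phi t a) (P t a)) ->
  reset_delta phi vr (fun _ => 1) ->
  (forall t, 0 < t -> lim_right (fun a => n t a) 0 (n t 0)) ->
  reset_delta (fun t a v => phi t a v / P t a * n t a) vr (fun t => n t 0).
Proof.
  intros HP Hreset Hn t Ht g Hg eps He.
  destruct (mult_ratio_continuity (g vr) (n t 0) eps He) as [eta [Heta Hcont]].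
  assert (T1 : test_fn (fun _ => 1)).
  { split; [apply continuity_const; intros x y; reflexivity|].
    exists 1. intros; rewrite Rabs_R1; lra. }
  destruct (Hreset t Ht g Hg eta Heta) as [d1 [Hd1 H1]].
  destruct (Hreset t Ht _ T1 eta Heta) as [d2 [Hd2 H2]].
  destruct (Hn t Ht eta Heta) as [d3 [Hd3 H3]].
  exists (Rmin d1 (Rmin d2 d3)). split; [repeat apply Rmin_pos; assumption|].
  pose proof (Rmin_l d1 (Rmin d2 d3)). pose proof (Rmin_r d1 (Rmin d2 d3)).
  pose proof (Rmin_l d2 d3). pose proof (Rmin_r d2 d3).
  intros a Ha.
  destruct (H1 a ltac:(lra)) as [I [HI HIb]]. destruct (H2 a ltac:(lra)) as [J [HJ HJb]].
  apply RInt_minf_is_iff in HI. apply RInt_minf_is_iff in HJ.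
  assert (HJP : J = P t a).
  { apply (is_RInt_minf_unique (phi t a)); [|apply HP; lra].
    apply (is_RInt_minf_ext (fun v => phi t a v * 1)); [intros; ring | exact HJ]. }
  subst J. rewrite Rmult_1_r in HIb, HJb.
  exists (n t a / P t a * I). split.
  - apply RInt_minf_is_iff.
    apply (is_RInt_minf_ext (fun v => n t a / P t a * (phi t a v * g v))); [intros; unfold Rdiv; ring|].
    apply is_RInt_minf_scal. exact HI.
  - replace (n t a / P t a * I) with (I * (n t a / P t a)) by ring.
    apply Hcont; [exact HIb | exact HJb | apply H3; lra].
Qed.

Lemma derivable_pt_lim_div_mult_fun (f P n : R -> R) x df dP dn :
  derivable_pt_lim f x df -> derivable_pt_lim P x dP -> derivable_pt_lim n x dn -> P x <> 0 ->
  derivable_pt_lim (fun s => f s / P s * n s) x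
    (df / P x * n x + f x * ((dn * P x - n x * dP) / (P x * P x))).
Proof.
  intros Hf HP Hn HP0.
  pose proof (derivable_pt_lim_mult _ n x _ _ (derivable_pt_lim_div f P x _ _ Hf HP HP0) Hn) as H.
  replace (df / P x * n x + f x * ((dn * P x - n x * dP) / (P x * P x)))
    with ((df * P x - dP * f x) / (P x)² * n x + f x / P x * dn) by (unfold Rsqr; field; exact HP0).
  exact H.
Qed.

Lemma Rabs_lt_Rmin_pos x x0 d :
  Rabs (x - x0) < Rmin d x0 -> 0 < x /\ Rabs (x - x0) < d.
Proof.
  intros H. pose proof (Rmin_l d x0). pose proof (Rmin_r d x0).
  apply Rabs_def2 in H as H'. split; lra.
Qed.

Lemma cont_Dbar_t_section (F : R -> R -> R -> R) t a :
  0 < t -> 0 < a -> cont_Dbar F -> jointly_continuous_le1 (fun s v => F s a v) t.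
Proof.
  intros Ht Ha HF v Hv eps He. destruct (HF t a v Ht Ha Hv eps He) as [d [Hd H]].
  exists (Rmin d t). split; [apply Rmin_pos; assumption|].
  intros x w Hx Hw Hw1. apply Rabs_lt_Rmin_pos in Hx as [Hx0 Hx].
  pose proof (Rmin_l d t).
  apply H; [exact Hx0 | exact Ha | exact Hw1 | exact Hx | rewrite Rminus_eq_0, Rabs_R0; exact Hd | lra].
Qed.

Lemma cont_Dbar_a_section (F : R -> R -> R -> R) t a :
  0 < t -> 0 < a -> cont_Dbar F -> jointly_continuous_le1 (fun b v => F t b v) a.
Proof.
  intros Ht Ha HF v Hv eps He. destruct (HF t a v Ht Ha Hv eps He) as [d [Hd H]].
  exists (Rmin d a). split; [apply Rmin_pos; assumption|].
  intros x w Hx Hw Hw1. apply Rabs_lt_Rmin_pos in Hx as [Hx0 Hx].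
  pose proof (Rmin_l d a).
  apply H; [exact Ht | exact Hx0 | exact Hw1 | rewrite Rminus_eq_0, Rabs_R0; exact Hd | exact Hx | lra].
Qed.

Section Rescaled_solution.

Variables (sigma : R) (mu : R -> R) (phi phit phia phiv phivv phiJv : R -> R -> R -> R).
Variables (P n nt na : R -> R -> R).

Hypothesis HFP : FP_classical sigma mu phi phit phia phiv phivv phiJv.
Hypothesis Hreg : NFPT_regular phit phia.
Hypothesis HP : forall t a, 0 < t -> 0 < a -> is_RInt_minf (phi t a) (P t a).

Lemma P_derivable_t t a : 0 < t -> 0 < a ->
  exists D, is_RInt_minf (phit t a) D /\ derivable_pt_lim (fun s => P s a) t D.
Proof.
  intros Ht Ha. destruct HFP as [Hd _]. destruct Hreg as [Ct [_ Hdom]].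
  destruct (Hdom t a Ht Ha) as [d [g [Hd0 [[Ig HIg] Hbd]]]]. apply RInt_minf_is_iff in HIg.
  apply (derivable_pt_lim_is_RInt_minf_param (fun s v => phi s a v) (fun s v => phit s a v)
           (fun s => P s a) g Ig t (Rmin d t)); [apply Rmin_pos; assumption | exact HIg | | | |].
  - intros x Hx. apply Rabs_lt_Rmin_pos in Hx as [Hx _]. apply HP; assumption.
  - intros x v Hx Hv. apply Rabs_lt_Rmin_pos in Hx as [Hx _]. apply (Hd x a v); assumption.
  - intros x v Hx Hv. apply Rabs_lt_Rmin_pos in Hx as [Hx0 Hx].
    apply (Hbd x a v); try assumption; [rewrite Rminus_eq_0, Rabs_R0 | ]; lra.
  - apply cont_Dbar_t_section; assumption.
Qed.

Lemma P_derivable_a t a : 0 < t -> 0 < a ->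
  exists D, is_RInt_minf (phia t a) D /\ derivable_pt_lim (fun b => P t b) a D.
Proof.
  intros Ht Ha. destruct HFP as [Hd _]. destruct Hreg as [_ [Ca Hdom]].
  destruct (Hdom t a Ht Ha) as [d [g [Hd0 [[Ig HIg] Hbd]]]]. apply RInt_minf_is_iff in HIg.
  apply (derivable_pt_lim_is_RInt_minf_param (fun b v => phi t b v) (fun b v => phia t b v)
           (fun b => P t b) g Ig a (Rmin d a)); [apply Rmin_pos; assumption | exact HIg | | | |].
  - intros x Hx. apply Rabs_lt_Rmin_pos in Hx as [Hx _]. apply HP; assumption.
  - intros x v Hx Hv. apply Rabs_lt_Rmin_pos in Hx as [Hx _]. apply (Hd t x v); assumption.
  - intros x v Hx Hv. apply Rabs_lt_Rmin_pos in Hx as [Hx0 Hx].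
    apply (Hbd t x v); try assumption; [rewrite Rminus_eq_0, Rabs_R0 | ]; lra.
  - apply cont_Dbar_a_section; assumption.
Qed.

Lemma P_transport t a : 0 < t -> 0 < a ->
  derivable_pt_lim (fun s => P s a) t (Derive (fun s => P s a) t) /\
  derivable_pt_lim (fun b => P t b) a (Derive (fun b => P t b) a) /\
  Derive (fun s => P s a) t + Derive (fun b => P t b) a = sigma ^ 2 / 2 * phiv t a 1.
Proof.
  intros Ht Ha.
  destruct (P_derivable_t t a Ht Ha) as [Dt [It Dert]].
  destruct (P_derivable_a t a Ht Ha) as [Da [Ia Dera]].
  rewrite (is_derive_unique _ _ _ (proj2 (is_derive_Reals _ _ _) Dert)),
          (is_derive_unique _ _ _ (proj2 (is_derive_Reals _ _ _) Dera)).
  split; [exact Dert|]. split; [exact Dera|].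
  destruct HFP as [Hd [Hlim [Hpde [Hbc Hnf]]]]. destruct Hreg as [Ct [Ca _]].
  destruct (Hlim t a Ht Ha) as [Hlim0 Hlim1]. rewrite (Hbc t a Ht Ha) in Hlim0.
  apply (is_RInt_minf_unique (fun v => phit t a v + phia t a v)).
  - replace (Dt + Da) with (1 * Dt + 1 * Da) by ring.
    apply (is_RInt_minf_ext (fun v => 1 * phit t a v + 1 * phia t a v)); [intros; ring|].
    apply is_RInt_minf_lin; assumption.
  - apply (is_RInt_minf_flux _ (phi t a) (phiv t a) (phivv t a) (phiJv t a) (mu t));
      try assumption; try (intros v Hv; apply (Hd t a v Ht Ha Hv)).
    + apply continuous_le1_plus.
      * apply (jointly_continuous_le1_section (fun s v => phit s a v) t).
        apply cont_Dbar_t_section; assumption.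
      * apply (jointly_continuous_le1_section (fun b v => phia t b v) a).
        apply cont_Dbar_a_section; assumption.
    + intros v Hv. pose proof (Hpde t a v Ht Ha Hv). lra.
    + apply Hnf; assumption.
Qed.

Hypothesis HPpos : forall t a, 0 < t -> 0 < a -> 0 < P t a.
Hypothesis Hn_der : forall t a, 0 < t -> 0 < a ->
  derivable_pt_lim (fun s => n s a) t (nt t a) /\ derivable_pt_lim (fun b => n t b) a (na t a).
Hypothesis Hn_eq : forall t a, 0 < t -> 0 < a ->
  nt t a + na t a + hazard sigma phiv P t a * n t a = 0.

Definition rescale (f : R -> R -> R -> R) t a v := f t a v / P t a * n t a.

Definition rescale_t t a v :=
  phit t a v / P t a * n t a +
  phi t a v * ((nt t a * P t a - n t a * Derive (fun s => P s a) t) / (P t a * P t a)).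

Definition rescale_a t a v :=
  phia t a v / P t a * n t a +
  phi t a v * ((na t a * P t a - n t a * Derive (fun b => P t b) a) / (P t a * P t a)).

(* Both P and n are transported along t + a with rate -S, so the factor n / P is constant
   along characteristics and the phi-terms of the product rule cancel. *)
Lemma rescale_pde t a v : 0 < t -> 0 < a -> v < 1 ->
  rescale_t t a v + rescale_a t a v + rescale phiJv t a v
  - sigma ^ 2 / 2 * rescale phivv t a v = 0.
Proof.
  intros Ht Ha Hv.
  destruct HFP as [_ [_ [Hpde _]]].
  destruct (P_transport t a Ht Ha) as [_ [_ HPsum]].
  pose proof (Hpde t a v Ht Ha Hv) as Hphi. pose proof (Hn_eq t a Ht Ha) as Hn.
  pose proof (HPpos t a Ht Ha) as HP0. unfold hazard in Hn.
  unfold rescale_t, rescale_a, rescale.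
  set (k := sigma ^ 2 / 2) in *.
  transitivity ((phit t a v + phia t a v + phiJv t a v - k * phivv t a v) * (n t a / P t a)
    + phi t a v * (((nt t a + na t a) * P t a
                    - n t a * (Derive (fun s => P s a) t + Derive (fun b => P t b) a))
                   / (P t a * P t a))).
  { field. lra. }
  rewrite Hphi, HPsum.
  replace (nt t a + na t a) with (- (- k * phiv t a 1 / P t a * n t a)) by lra.
  field. lra.
Qed.

Lemma rescale_FP_classical :
  FP_classical sigma mu (rescale phi) rescale_t rescale_a
    (rescale phiv) (rescale phivv) (rescale phiJv).
Proof.
  destruct HFP as [Hd [Hlim [_ [Hbc Hnf]]]].
  split; [|split; [|split; [|split]]].
  - intros t a v Ht Ha Hv.
    destruct (Hd t a v Ht Ha Hv) as [D1 [D2 [D3 [D4 D5]]]].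
    destruct (P_transport t a Ht Ha) as [DPt [DPa _]].
    destruct (Hn_der t a Ht Ha) as [Dnt Dna].
    assert (HP0 : P t a <> 0) by (pose proof (HPpos t a Ht Ha); lra).
    unfold rescale, rescale_t, rescale_a. split; [|split; [|split; [|split]]].
    + exact (derivable_pt_lim_div_mult_fun _ (fun s => P s a) (fun s => n s a) t _ _ _
               D1 DPt Dnt HP0).
    + exact (derivable_pt_lim_div_mult_fun _ (fun b => P t b) (fun b => n t b) a _ _ _
               D2 DPa Dna HP0).
    + exact (derivable_pt_lim_div_mult _ v _ _ _ D3).
    + exact (derivable_pt_lim_div_mult _ v _ _ _ D4).
    + apply (derivable_pt_lim_ext (fun w => (mu t - w) * phi t a w / P t a * n t a));
        [intros; unfold Rdiv; ring | exact (derivable_pt_lim_div_mult _ v _ _ _ D5)].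
  - intros t a Ht Ha. destruct (Hlim t a Ht Ha) as [L1 L2].
    split; apply lim_left_div_mult; assumption.
  - intros t a v Ht Ha Hv. apply rescale_pde; assumption.
  - intros t a Ht Ha. unfold rescale. rewrite (Hbc t a Ht Ha). unfold Rdiv. ring.
  - intros t a Ht Ha. apply (lim_minf_scal _ _ (n t a / P t a) (Hnf t a Ht Ha)).
    intros. unfold rescale, Rdiv. ring.
Qed.

Lemma hazard_mult_rescale t a :
  hazard sigma phiv P t a * n t a = - (sigma ^ 2 / 2) * rescale phiv t a 1.
Proof. unfold hazard, rescale, Rdiv. ring. Qed.

End Rescaled_solution.

Theorem theorem4
  (sigma vr : R) (mu : R -> R)
  (Hsigma : 0 < sigma) (Hvr : vr < 1)
  (phi phit phia phiv phivv phiJv : R -> R -> R -> R)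
  (Hphi : NFPT sigma vr mu phi phit phia phiv phivv phiJv)
  (Hreg : NFPT_regular phit phia)
  (P : R -> R -> R)
  (HP : forall t a, 0 < t -> 0 < a ->
          RInt_minf_is (fun v => phi t a v) 1 (P t a) /\ 0 < P t a)
  (n nt na : R -> R -> R)
  (Hn_der : forall t a, 0 < t -> 0 < a ->
     derivable_pt_lim (fun s => n s a) t (nt t a) /\
     derivable_pt_lim (fun b => n t b) a (na t a))
  (Hn_eq : forall t a, 0 < t -> 0 < a ->
     nt t a + na t a + hazard sigma phiv P t a * n t a = 0)
  (Hn_bc : forall t, 0 < t ->
     RInt_0pinf_is (fun a => hazard sigma phiv P t a * n t a) (n t 0))
  (Hn_cont : forall t, 0 < t -> lim_right (fun a => n t a) 0 (n t 0)) :
  let pi := fun t a v => phi t a v / P t a * n t a in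
  exists (pit pia piv pivv piJv : R -> R -> R -> R) (r : R -> R),
    FP_classical sigma mu pi pit pia piv pivv piJv /\
    reset_delta pi vr r /\
    (forall t, 0 < t ->
       RInt_0pinf_is (fun a => hazard sigma phiv P t a * n t a) (r t) /\
       RInt_0pinf_is (fun a => - (sigma ^ 2 / 2) * piv t a 1) (r t)).
Proof.
  intros pi.
  destruct Hphi as [HFP [Hreset _]].
  assert (HPint : forall t a, 0 < t -> 0 < a -> is_RInt_minf (phi t a) (P t a))
    by (intros t a Ht Ha; apply RInt_minf_is_iff, HP; assumption).
  assert (HPpos : forall t a, 0 < t -> 0 < a -> 0 < P t a)
    by (intros t a Ht Ha; apply HP; assumption).
  exists (rescale_t phi phit P n nt), (rescale_a phi phia P n na),
    (rescale P n phiv), (rescale P n phivv), (rescale P n phiJv), (fun t => n t 0).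
  split; [|split].
  - exact (rescale_FP_classical sigma mu phi phit phia phiv phivv phiJv P n nt na
             HFP Hreg HPint HPpos Hn_der Hn_eq).
  - exact (reset_delta_rescale phi P n vr HPint Hreset Hn_cont).
  - intros t Ht. split; [exact (Hn_bc t Ht)|].
    rewrite <- (functional_extensionality _ _ (fun a => hazard_mult_rescale sigma phiv P n t a)).
    exact (Hn_bc t Ht).
Qed.
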